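(* Let $n,t$ be positive integers, $\sigma\in(0,1]$ with $\sigma n$ an integer, and $\alpha>0$ such that $k=\alpha/\sigma$ is a positive integer. For each $j\in[t]$ let $S_j$ be a map assigning to each $(x_1,\dots,x_{j-1})\in[n]^{j-1}$ a subset $S_j(x_1,\dots,x_{j-1})\subseteq[n]$ of size $\sigma n$; the associated adaptive sequence $\mathfrak{D}$ draws $X_j$ uniformly from $S_j(X_1,\dots,X_{j-1})$ for $j=1,\dots,t$. Construct $(X_1,Z_1^{(1)},\dots,Z_k^{(1)},\dots,X_t,Z_1^{(t)},\dots,Z_k^{(t)})$ as follows: for $j=1,\dots,t$, draw $Y_1^{(j)},\dots,Y_k^{(j)}$ independently and uniformly from $[n]$; for each $i$ with $Y_i^{(j)}\notin S_j(X_1,\dots,X_{j-1})$ set $Z_i^{(j)}=Y_i^{(j)}$; for each $i$ with $Y_i^{(j)}\in S_j(X_1,\dots,X_{j-1})$ draw $\tilde W_i^{(j)}$ uniformly and independently from $S_j(X_1,\dots,X_{j-1})$ and set $Z_i^{(j)}=\tilde W_i^{(j)}$; if some $Y_i^{(j)}\in S_j(X_1,\dots,X_{j-1})$, let $X_j$ be chosen uniformly at random among the drawn $\tilde W_i^{(j)}$, and otherwise draw $X_j$ uniformly from $S_j(X_1,\dots,X_{j-1})$ independently. Then: (a) $X_1,\dots,X_t$ is distributed according to $\mathfrak{D}$; (b) each $Z_i^{(j)}$ is uniformly distributed on $[n]$; (c) the $Z_i^{(j)}$ ($i\in[k]$, $j\in[t]$) are all mutually independent; (d) with probability at least $1-t(1-\sigma)^{\alpha/\sigma}$,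 $\{X_1,\dots,X_t\}\subseteq\{Z_i^{(j)} : i\in[k],\ j\in[t]\}$. *)

From HB Require Import structures.
From mathcomp Require Import all_boot all_order all_algebra.
Set Implicit Arguments. Unset Strict Implicit. Unset Printing Implicit Defensive.
Import Order.TTheory GRing.Theory Num.Theory.
Local Open Scope ring_scope.

(* Elements of [n] are 'I_n (0-based); steps j = 0..t-1 (0-based).
   The randomness used at one step j:
     Y   : 'I_k -> 'I_n   (the Y_i^{(j)}, uniform on [n]^k)
     W   : 'I_k -> 'I_n   (the tilde W_i^{(j)}, uniform on S^k; W_i is only
                           used when Y_i \in S, so drawing all of them
                           independently is the same as drawing only those)
     c   : 'I_k           (the uniformly chosen index among {i | Y_i \in S}
                           when that set is nonempty; irrelevant otherwise)
     f   : 'I_n           (the fallback X_j, uniform on S; used only when no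
                           Y_i lies in S). *)
Definition step (n k : nat) :=
  ({ffun 'I_k -> 'I_n} * {ffun 'I_k -> 'I_n} * 'I_k * 'I_n)%type.

Section Coupling.
Variables (n k : nat).

Definition stY (w : step n k) : {ffun 'I_k -> 'I_n} := w.1.1.1.
Definition stW (w : step n k) : {ffun 'I_k -> 'I_n} := w.1.1.2.
Definition stc (w : step n k) : 'I_k := w.1.2.
Definition stf (w : step n k) : 'I_n := w.2.

Definition xstep (A : {set 'I_n}) (w : step n k) : 'I_n :=
  if [exists i, stY w i \in A] then stW w (stc w) else stf w.

Definition zstep (A : {set 'I_n}) (w : step n k) (i : 'I_k) : 'I_n :=
  if stY w i \in A then stW w i else stY w i.

Definition stepw (R : realFieldType) (A : {set 'I_n}) (w : step n k) : R :=
  let H := [set i | stY w i \in A] in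
  (n%:R^-1) ^+ k
  * (if [forall i, stW w i \in A] then (#|A|%:R^-1) ^+ k else 0)
  * (if H != set0 then (if stc w \in H then (#|H|%:R)^-1 else 0)
     else k%:R^-1)
  * (if stf w \in A then #|A|%:R^-1 else 0).

Variables (t : nat) (S : nat -> seq 'I_n -> {set 'I_n}).
(* S j h = S_{j+1}(h) for a history h of length j *)

Definition Xseq (ws : seq (step n k)) : seq 'I_n :=
  foldl (fun h w => rcons h (xstep (S (size h) h) w)) [::] ws.

Definition hist (om : t.-tuple (step n k)) (j : nat) : seq 'I_n :=
  take j (Xseq om).

Definition Xof (om : t.-tuple (step n k)) (j : 'I_t) : 'I_n :=
  xstep (S j (hist om j)) (tnth om j).

Definition Zof (om : t.-tuple (step n k)) (j : 'I_t) (i : 'I_k) : 'I_n :=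
  zstep (S j (hist om j)) (tnth om j) i.

Definition weight (R : realFieldType) (om : t.-tuple (step n k)) : R :=
  \prod_(j < t) stepw R (S j (hist om j)) (tnth om j).

Definition Pr (R : realFieldType) (E : pred (t.-tuple (step n k))) : R :=
  \sum_(om : t.-tuple (step n k) | E om) weight R om.

Definition adaptive_pmf (R : realFieldType) (x : t.-tuple 'I_n) : R :=
  \prod_(j < t) (if tnth x j \in S j (take j x)
                 then #|S j (take j x)|%:R^-1 else 0).

End Coupling.

(* Given the past, one step of the construction is a product of independent
   uniform choices: Y on [n]^k, W on S^k, the index c on {i | Y_i \in S} (on all
   of [k] if that set is empty) and a fallback f on S.  Since Z_i = W_i when
   Y_i \in S and Z_i = Y_i otherwise, summing over (Y_i, W_i) shows that the Z_i
   are independent and uniform on [n]; and whatever Y is, X is W_c or f, hence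
   uniform on S.  The weight of a run is the product of its step weights, so an
   event prescribed step by step has for probability the product of the one-step
   probabilities (chain rule); this gives (a)-(c).  For (d), X_j = Z_c^(j) as
   soon as Y_c^(j) \in S_j, and up to a null set this fails only when no
   Y_i^(j) lies in S_j, which has probability (1 - |S_j|/n)^k = (1 - sigma)^k;
   a union bound over j concludes. *)

From HB Require Import structures.
From mathcomp Require Import all_boot all_order all_algebra.
From mathcomp Require Import ring.
Import Order.TTheory GRing.Theory Num.Theory.
Local Open Scope ring_scope.
Set Implicit Arguments. Unset Strict Implicit. Unset Printing Implicit Defensive.

Lemma sum_tuple_rcons (R : nmodType) (T : finType) t (F : t.+1.-tuple T -> R) :
  \sum_(s : t.+1.-tuple T) F s = \sum_(p : t.-tuple T) \sum_(x : T) F [tuple of rcons p x].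
Proof.
rewrite pair_bigA /=.
pose split_last (s : t.+1.-tuple T) :=
  ([tuple of belast (thead s) (behead s)], last (thead s) (behead s)).
rewrite (reindex (fun q : t.-tuple T * T => [tuple of rcons q.1 q.2])) //.
exists split_last => [[[[|y q] ?] x] _ | s _].
- by congr pair; apply: val_inj.
- rewrite /split_last /thead (tnth_nth y) /=.
  by congr pair; [apply: val_inj|]; rewrite /= ?belast_rcons ?last_rcons.
- by apply: val_inj; rewrite /= -lastI [in RHS](tuple_eta s).
Qed.

Section ProductChain.
Variable R : comPzSemiRingType.

Lemma prod_take_rcons (T : Type) t (F : nat -> seq T -> T -> R) (p : t.-tuple T) x :
  \prod_(j < t.+1) F j (take j [tuple of rcons p x]) (tnth [tuple of rcons p x] j)
  = (\prod_(j < t) F j (take j p) (tnth p j)) * F t p x.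
Proof.
rewrite big_ord_recr /=; congr (_ * _); last first.
  by rewrite (tnth_nth x) /= -cats1 take_size_cat ?nth_cat size_tuple ?ltnn ?subnn.
apply: eq_bigr => j _; rewrite (tnth_nth x) /= -cats1 takel_cat ?size_tuple 1?ltnW //.
by rewrite nth_cat size_tuple ltn_ord -tnth_nth.
Qed.

Lemma sum_tuple_chain (T : finType) t (F : nat -> seq T -> T -> R) (c : nat -> R) :
  (forall j (p : j.-tuple T), (j < t)%N ->
     \prod_(i < j) F i (take i p) (tnth p i) != 0 -> \sum_x F j p x = c j) ->
  \sum_(s : t.-tuple T) \prod_(j < t) F j (take j s) (tnth s j) = \prod_(j < t) c j.
Proof.
elim: t => [|t IH] Fc.
  rewrite big_ord0 (big_pred1 [tuple]) ?big_ord0 // => s.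
  by apply/esym/eqP; exact: tuple0.
rewrite sum_tuple_rcons big_ord_recr /= -IH => [|j p /ltnW]; last exact: Fc.
rewrite mulr_suml; apply: eq_bigr => p _.
under eq_bigr do rewrite prod_take_rcons.
rewrite -mulr_sumr.
have [->|nz] := eqVneq (\prod_(j < t) F j (take j p) (tnth p j)) 0; first by rewrite !mul0r.
by rewrite Fc.
Qed.

Lemma prodr_if0 (I : finType) (P : pred I) (F : I -> R) :
  \prod_i (if P i then F i else 0) = if [forall i, P i] then \prod_i F i else 0.
Proof.
case: forallP => [allP | /forallP/forallPn[i /negbTE Pi]].
  by apply: eq_bigr => i _; rewrite allP.
by rewrite (bigD1 i) //= Pi mul0r.
Qed.

Lemma sum_ffun_prod_at (I T : finType) (p G : T -> R) (i0 : I) :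
  \sum_v p v = 1 ->
  \sum_(W : {ffun I -> T}) (\prod_i p (W i)) * G (W i0) = \sum_v p v * G v.
Proof.
move=> p1; transitivity (\prod_i \sum_v p v * (if i == i0 then G v else 1)).
  rewrite bigA_distr_bigA; apply: eq_bigr => W _.
  rewrite big_split /=; congr (_ * _); rewrite (bigD1 i0) //= eqxx big1 ?mulr1 //.
  by move=> i /negbTE ->.
rewrite (bigD1 i0) //= eqxx [X in _ * X]big1 ?mulr1 // => i /negbTE ->.
by under eq_bigr do rewrite mulr1.
Qed.

End ProductChain.

Section NonnegativeSums.
Variables (R : numDomainType) (T : finType) (w : T -> R).
Hypothesis w_ge0 : forall x, 0 <= w x.

Lemma ler_sum_subset (E F : pred T) :
  (forall x, E x -> F x) -> \sum_(x | E x) w x <= \sum_(x | F x) w x.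
Proof.
move=> EF; rewrite [leLHS]big_mkcond [leRHS]big_mkcond /=; apply: ler_sum => x _.
by case: ifPn => [/EF -> // | _]; case: ifP.
Qed.

Lemma ler_sum_exists (I : finType) (E : I -> pred T) :
  \sum_(x | [exists i, E i x]) w x <= \sum_i \sum_(x | E i x) w x.
Proof.
under [leRHS]eq_bigr do rewrite big_mkcond.
rewrite [leLHS]big_mkcond exchange_big /=; apply: ler_sum => x _.
have terms_ge0 i : 0 <= (if E i x then w x else 0) by case: ifP.
case: existsP => [[i Ei] | _]; last exact: sumr_ge0.
by rewrite (bigD1 i) //= Ei lerDl sumr_ge0.
Qed.

End NonnegativeSums.

Section UniformDistribution.
Variables (R : numFieldType) (T : finType).

Definition unif_on (B : {set T}) (x : T) : R := if x \in B then #|B|%:R^-1 else 0.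

Lemma unif_on_ge0 B x : 0 <= unif_on B x.
Proof. by rewrite /unif_on; case: ifP; rewrite ?invr_ge0. Qed.

Lemma sum_unif_on B : B != set0 -> \sum_x unif_on B x = 1.
Proof.
rewrite -card_gt0 => B_gt0; rewrite -big_mkcond /= sumr_const -[LHS]mulr_natr.
by rewrite mulVf // pnatr_eq0 -lt0n.
Qed.

End UniformDistribution.

Arguments unif_on {R T} B x.
Arguments sum_unif_on {R T B}.

Section History.
Variables (n k : nat) (S : nat -> seq 'I_n -> {set 'I_n}).

Lemma Xseq_rcons (s : seq (step n k)) w :
  Xseq S (rcons s w) = rcons (Xseq S s) (xstep (S (size (Xseq S s)) (Xseq S s)) w).
Proof. exact: foldl_rcons. Qed.

Lemma size_Xseq (s : seq (step n k)) : size (Xseq S s) = size s.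
Proof. by elim/last_ind: s => // s w IH; rewrite Xseq_rcons !size_rcons IH. Qed.

Lemma prefix_Xseq (s1 s2 : seq (step n k)) : prefix (Xseq S s1) (Xseq S (s1 ++ s2)).
Proof.
elim/last_ind: s2 => [|s2 w]; first by rewrite cats0 prefix_refl.
by rewrite -rcons_cat Xseq_rcons => /prefix_trans; apply; rewrite prefix_rcons.
Qed.

Lemma Xseq_take j (s : seq (step n k)) : Xseq S (take j s) = take j (Xseq S s).
Proof.
have [le_js | /ltnW le_sj] := leqP j (size s); last first.
  by rewrite !take_oversize ?size_Xseq.
have := prefix_Xseq (take j s) (drop j s).
by rewrite cat_take_drop prefixE size_Xseq size_takel // => /eqP.
Qed.

Lemma nth_Xseq x0 w0 (s : seq (step n k)) i : (i < size s)%N ->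
  nth x0 (Xseq S s) i = xstep (S i (Xseq S (take i s))) (nth w0 s i).
Proof.
move=> lt_is; rewrite -(nth_take x0 (ltnSn i)) -Xseq_take (take_nth w0 lt_is).
by rewrite Xseq_rcons nth_rcons size_Xseq size_takel ?ltnn ?eqxx // ltnW.
Qed.

End History.

Lemma sum_step (R : nmodType) n k (F : step n k -> R) :
  \sum_w F w = \sum_Y \sum_W \sum_c \sum_f F (Y, W, c, f).
Proof. by rewrite !pair_bigA; apply: eq_bigr => -[[[Y W] c] f]. Qed.

Section OneStep.
Variables (R : realFieldType) (n k : nat) (A : {set 'I_n}).
Hypotheses (n_gt0 : (0 < n)%N) (k_gt0 : (0 < k)%N) (A_neq0 : A != set0).

Definition choice_set (Y : {ffun 'I_k -> 'I_n}) : {set 'I_k} :=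
  if [set i | Y i \in A] != set0 then [set i | Y i \in A] else setT.

Lemma choice_set_neq0 Y : choice_set Y != set0.
Proof.
rewrite /choice_set; case: ifP => // _.
by apply/set0Pn; exists (Ordinal k_gt0); rewrite inE.
Qed.

Lemma stepwE Y W (c : 'I_k) (f : 'I_n) :
  stepw R A (Y, W, c, f) = (n%:R^-1) ^+ k * \prod_i unif_on A (W i)
                           * unif_on (choice_set Y) c * unif_on A f.
Proof.
rewrite /stepw /stY /stW /stc /stf /unif_on /choice_set prodr_if0 prodr_const card_ord /=.
by case: (_ != set0); rewrite ?in_setT ?cardsT ?card_ord.
Qed.

Lemma stepw_ge0 (w : step n k) : 0 <= stepw R A w.
Proof.
case: w => [[[Y W] c] f]; rewrite stepwE.
rewrite !mulr_ge0 ?exprn_ge0 ?invr_ge0 ?unif_on_ge0 // prodr_ge0 // => i _.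
exact: unif_on_ge0.
Qed.

Lemma step_sum_split (F : step n k -> R) :
  \sum_w stepw R A w * F w =
  (n%:R^-1) ^+ k * \sum_(Y : {ffun 'I_k -> 'I_n}) \sum_c unif_on (choice_set Y) c
     * \sum_f unif_on A f * \sum_(W : {ffun 'I_k -> 'I_n}) \prod_i unif_on A (W i)
     * F (Y, W, c, f).
Proof.
rewrite sum_step mulr_sumr; apply: eq_bigr => Y _; rewrite exchange_big mulr_sumr.
apply: eq_bigr => c _; rewrite exchange_big !mulr_sumr; apply: eq_bigr => f _.
by rewrite !mulr_sumr; apply: eq_bigr => W _; rewrite stepwE !mulrA; congr (_ * _); ring.
Qed.

Lemma step_sum_YW (F : {ffun 'I_k -> 'I_n} -> {ffun 'I_k -> 'I_n} -> R) :
  \sum_w stepw R A w * F (stY w) (stW w) =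
  (n%:R^-1) ^+ k * \sum_(Y : {ffun 'I_k -> 'I_n}) \sum_(W : {ffun 'I_k -> 'I_n})
     \prod_i unif_on A (W i) * F Y W.
Proof.
rewrite step_sum_split; congr (_ * _); apply: eq_bigr => Y _; rewrite /stY /stW /=.
under eq_bigr do rewrite -mulr_suml sum_unif_on // mul1r.
by rewrite -mulr_suml sum_unif_on ?mul1r ?choice_set_neq0.
Qed.

Lemma step_sum_prod (g : 'I_k -> 'I_n -> 'I_n -> R) :
  \sum_w stepw R A w * \prod_i g i (stY w i) (stW w i) =
  \prod_i (n%:R^-1 * \sum_y \sum_v unif_on A v * g i y v).
Proof.
rewrite (step_sum_YW (fun Y W => \prod_i g i (Y i) (W i))) big_split prodr_const card_ord.
congr (_ * _).
rewrite bigA_distr_bigA; apply: eq_bigr => Y _.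
by rewrite bigA_distr_bigA; apply: eq_bigr => W _; rewrite big_split.
Qed.

Lemma sum_resample (phi : 'I_n -> R) :
  \sum_y \sum_v unif_on A v * phi (if y \in A then v else y) = \sum_u phi u.
Proof.
have A_gt0 : (#|A|%:R : R) != 0 by rewrite pnatr_eq0 -lt0n card_gt0.
rewrite (bigID (mem A)) [RHS](bigID (mem A)) /=; congr (_ + _).
  rewrite (eq_bigr (fun=> \sum_v unif_on A v * phi v)) => [|y ->] //.
  rewrite sumr_const (_ : #|pred_of_set A| = #|A|) // -mulr_natl mulr_sumr [RHS]big_mkcond.
  apply: eq_bigr => v _.
  by rewrite /unif_on; case: ifP => _; rewrite ?mul0r ?mulr0 // mulrA mulfV ?mul1r.
apply: eq_bigr => y /negbTE ->.
by rewrite -mulr_suml sum_unif_on ?mul1r.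
Qed.

Lemma step_Z_prod (phi : 'I_k -> 'I_n -> R) :
  \sum_w stepw R A w * \prod_i phi i (zstep A w i) = \prod_i (n%:R^-1 * \sum_u phi i u).
Proof.
rewrite /zstep (step_sum_prod (fun i y v => phi i (if y \in A then v else y))).
by under eq_bigr do rewrite sum_resample.
Qed.

Lemma step_Z_in (B : 'I_k -> {set 'I_n}) :
  \sum_w (if [forall i, zstep A w i \in B i] then stepw R A w else 0) =
  \prod_i (#|B i|%:R / n%:R).
Proof.
transitivity (\sum_(w : step n k)
                stepw R A w * \prod_i (if zstep A w i \in B i then 1 else 0)).
  by apply: eq_bigr => w _; rewrite prodr_if0 big1_eq; case: ifP; rewrite ?mulr1 ?mulr0.
rewrite (step_Z_prod (fun i u => if u \in B i then 1 else 0)); apply: eq_bigr => i _.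
by rewrite -big_mkcond sumr_const mulrC.
Qed.

Lemma step_total : \sum_(w : step n k) stepw R A w = 1.
Proof.
transitivity (\prod_(i < k) (#|[set: 'I_n]|%:R / n%:R : R)); last first.
  by rewrite big1 // => i _; rewrite cardsT card_ord divff // pnatr_eq0 -lt0n.
rewrite -step_Z_in; apply: eq_bigr => w _.
by rewrite (introT forallP) // => i; rewrite inE.
Qed.

Lemma step_Z_at i0 v :
  \sum_(w : step n k) (if zstep A w i0 == v then stepw R A w else 0) = n%:R^-1.
Proof.
have := step_Z_in (fun i => if i == i0 then [set v] else [set: 'I_n]).
rewrite [X in _ = X -> _](bigD1 i0) //= eqxx cards1 [X in _ = _ * X -> _]big1.
  rewrite mul1r mulr1 => <-; apply: eq_bigr => w _; congr (if _ then _ else _).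
  apply/eqP/forallP => [<- i | /(_ i0)]; last by rewrite eqxx inE => /eqP.
  by case: eqP => [->|_]; rewrite inE.
by move=> i /negbTE ->; rewrite cardsT card_ord divff // pnatr_eq0 -lt0n.
Qed.

Lemma step_Z_all (z : 'I_k -> 'I_n) :
  \sum_(w : step n k) (if [forall i, zstep A w i == z i] then stepw R A w else 0) =
  \prod_(i < k) n%:R^-1.
Proof.
have := step_Z_in (fun i => [set z i]).
under [X in _ = X -> _]eq_bigr do rewrite cards1 mul1r.
move=> <-; apply: eq_bigr => w _; congr (if _ then _ else _).
by apply: eq_forallb => i; rewrite in_set1.
Qed.

Lemma stepw_eq0_miss (w : step n k) :
  [exists i, stY w i \in A] -> stY w (stc w) \notin A -> stepw R A w = 0.
Proof.
case: w => [[[Y W] c] f] /existsP[i Yi] Yc; rewrite stepwE /unif_on /choice_set /=.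
have -> : [set i | Y i \in A] != set0 by apply/set0Pn; exists i; rewrite inE.
by rewrite inE (negbTE Yc) mulr0 mul0r.
Qed.

Lemma step_miss :
  \sum_(w : step n k) (if stY w (stc w) \notin A then stepw R A w else 0) =
  (1 - #|A|%:R / n%:R) ^+ k.
Proof.
have := step_sum_prod (fun _ y _ => if y \notin A then 1 else 0).
under [in RHS]eq_bigr do under eq_bigr do rewrite -mulr_suml sum_unif_on // mul1r.
have missE : \sum_(y : 'I_n) (if y \notin A then 1 else 0) = n%:R - #|A|%:R :> R.
  rewrite -big_mkcond /= sumr_const; apply/eqP.
  by rewrite eq_sym subr_eq -natrD addnC cardC card_ord.
rewrite missE prodr_const card_ord mulrBr mulVf ?pnatr_eq0 -?lt0n // mulrC => <-.
apply: eq_bigr => w _; rewrite prodr_if0 big1_eq.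
case: forallP => [/(_ (stc w)) -> | /forallP/forallPn[i]]; rewrite ?mulr1 //.
rewrite mulr0 negbK => Yi.
by case: ifP => // Yc; apply: stepw_eq0_miss => //; apply/existsP; exists i.
Qed.

Lemma step_X (x : 'I_n) :
  \sum_(w : step n k) (if xstep A w == x then stepw R A w else 0) = unif_on A x.
Proof.
have dirac (F : 'I_n -> R) : \sum_v F v * (if v == x then 1 else 0) = F x.
  by rewrite (bigD1 x) //= eqxx mulr1 big1 ?addr0 // => v /negbTE ->; rewrite mulr0.
have sum_W_at c (G : 'I_n -> R) :
    \sum_(W : {ffun 'I_k -> 'I_n}) \prod_i unif_on A (W i) * G (W c) =
    \sum_v unif_on A v * G v.
  exact/sum_ffun_prod_at/sum_unif_on.
transitivity (\sum_(w : step n k) stepw R A w * (if xstep A w == x then 1 else 0)).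
  by apply: eq_bigr => w _; case: ifP; rewrite ?mulr1 ?mulr0.
rewrite step_sum_split (eq_bigr (fun=> unif_on A x)) => [|Y _].
  rewrite sumr_const card_ffun !card_ord -[unif_on A x *+ _]mulr_natl mulrA natrX -exprMn.
  by rewrite mulVf ?expr1n ?mul1r // pnatr_eq0 -lt0n.
rewrite -[RHS]mul1r -[X in _ = X * _](sum_unif_on (choice_set_neq0 Y)) mulr_suml.
apply: eq_bigr => c _; congr (_ * _); rewrite /xstep /stY /stW /stc /stf /=.
case: [exists i, Y i \in A].
  under eq_bigr do rewrite (sum_W_at c (fun v => if v == x then 1 else 0)) dirac.
  by rewrite -mulr_suml sum_unif_on ?mul1r.
under eq_bigr do rewrite (sum_W_at c (fun=> _)) -mulr_suml sum_unif_on // mul1r.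
exact: dirac.
Qed.

End OneStep.

Lemma weight_ge0 (R : realFieldType) n k t S (om : t.-tuple (step n k)) :
  0 <= weight S R om.
Proof. by apply: prodr_ge0 => j _; apply: stepw_ge0. Qed.

Section Construction.
Variables (R : realFieldType) (n k t m : nat) (S : nat -> seq 'I_n -> {set 'I_n}).
Hypotheses (n_gt0 : (0 < n)%N) (k_gt0 : (0 < k)%N) (m_gt0 : (0 < m)%N).
Hypothesis card_S : forall j h, (j < t)%N -> size h = j -> #|S j h| = m.

Definition cond_stepw j (p : seq (step n k)) : step n k -> R := stepw R (S j (Xseq S p)).

Lemma S_Xseq_neq0 j (p : seq (step n k)) :
  (j < t)%N -> size p = j -> S j (Xseq S p) != set0.
Proof. by move=> lt_jt size_p; rewrite -card_gt0 card_S ?size_Xseq. Qed.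

Lemma weightE (om : t.-tuple (step n k)) :
  weight S R om = \prod_(j < t) cond_stepw j (take j om) (tnth om j).
Proof. by apply: eq_bigr => j _; rewrite /cond_stepw /hist -Xseq_take. Qed.

Lemma Pr_chain (E : pred (t.-tuple (step n k)))
    (e : nat -> seq (step n k) -> step n k -> bool) (c : nat -> R) :
  (forall om, E om = [forall j : 'I_t, e j (take j om) (tnth om j)]) ->
  (forall j (p : j.-tuple (step n k)), (j < t)%N ->
     [forall i : 'I_j, e i (take i p) (tnth p i)] ->
     \sum_w (if e j p w then cond_stepw j p w else 0) = c j) ->
  Pr S R E = \prod_(j < t) c j.
Proof.
move=> Ee step_e.
pose F j p w := if e j p w then cond_stepw j p w else 0.
transitivity (\sum_(om : t.-tuple (step n k)) \prod_(j < t) F j (take j om) (tnth om j)).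
  by rewrite /Pr big_mkcond; apply: eq_bigr => om _; rewrite Ee weightE prodr_if0.
apply: (sum_tuple_chain (F := F)) => j p lt_jt; rewrite prodr_if0.
by case: ifP => [prefix_e _ | _]; [apply: step_e | rewrite eqxx].
Qed.

Lemma sum_weight : \sum_(om : t.-tuple (step n k)) weight S R om = 1.
Proof.
transitivity (\prod_(j < t) (1 : R)); last exact: big1_eq.
apply: (Pr_chain (E := xpredT) (e := fun _ _ _ => true) (c := fun _ => 1)).
  by move=> om; apply/esym/forallP.
move=> j p lt_jt _.
exact/step_total/S_Xseq_neq0/size_tuple.
Qed.

Lemma Pr_predC (E : pred (t.-tuple (step n k))) : Pr S R (predC E) = 1 - Pr S R E.
Proof. by rewrite /Pr -sum_weight [in RHS](bigID E) /= addrAC subrr add0r. Qed.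

Lemma Pr_chain_at (j0 : 'I_t) (E : pred (t.-tuple (step n k)))
    (e : seq (step n k) -> step n k -> bool) (c : R) :
  (forall om, E om = e (take j0 om) (tnth om j0)) ->
  (forall p, size p = j0 -> \sum_w (if e p w then cond_stepw j0 p w else 0) = c) ->
  Pr S R E = c.
Proof.
move=> Ee step_e.
rewrite (Pr_chain (e := fun j p w => (j == j0) ==> e p w)
                  (c := fun j => if j == j0 then c else 1)) => [|om | j p lt_jt _].
- by rewrite (bigD1 j0) //= eqxx big1 ?mulr1 // => j; rewrite val_eqE => /negbTE ->.
- apply/idP/forallP => [E_om j | /(_ j0)]; last by rewrite eqxx -Ee.
  by apply/implyP => /eqP/val_inj ->; rewrite -Ee.
- case: eqP => [j_j0 | _]; first by move: (step_e p); rewrite -j_j0 size_tuple; apply.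
  exact/step_total/S_Xseq_neq0/size_tuple.
Qed.

Lemma Pr_X (x : t.-tuple 'I_n) :
  @Pr n k t S R [pred om | [forall j, Xof S om j == tnth x j]] = adaptive_pmf S R x.
Proof.
pose x0 := Ordinal n_gt0.
rewrite (Pr_chain (e := fun j p w => xstep (S j (Xseq S p)) w == nth x0 x j)
                  (c := fun j => unif_on (S j (take j x)) (nth x0 x j)))
  => [|om | j p lt_jt hist_x].
- by apply: eq_bigr => j _; rewrite (tnth_nth x0).
- by apply: eq_forallb => j; rewrite /= /Xof /hist -Xseq_take (tnth_nth x0).
have Xseq_p : Xseq S p = take j x.
  apply: (@eq_from_nth _ x0) => [|i]; rewrite size_Xseq size_tuple.
    by rewrite size_takel // size_tuple ltnW.
  move=> lt_ij; rewrite nth_take // (nth_Xseq S x0 (tnth p (Ordinal lt_ij))) ?size_tuple //.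
  move/forallP: hist_x => /(_ (Ordinal lt_ij)) /eqP <-.
  by rewrite [in RHS](tnth_nth (tnth p (Ordinal lt_ij))).
rewrite /cond_stepw Xseq_p; apply: step_X => //.
by rewrite -Xseq_p S_Xseq_neq0 ?size_tuple.
Qed.

Lemma Pr_Z_at j0 i0 v : @Pr n k t S R [pred om | Zof S om j0 i0 == v] = n%:R^-1.
Proof.
apply: (Pr_chain_at (e := fun p w => zstep (S j0 (Xseq S p)) w i0 == v)) => [om | p size_p].
  by rewrite /= /Zof /hist -Xseq_take.
exact/step_Z_at/S_Xseq_neq0.
Qed.

Lemma Pr_Z_all (z : 'I_t -> 'I_k -> 'I_n) :
  @Pr n k t S R [pred om | [forall j, forall i, Zof S om j i == z j i]] =
  \prod_(j < t) \prod_(i < k) n%:R^-1.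
Proof.
pose z' j i := oapp (z^~ i) (Ordinal n_gt0) (insub j).
apply: (Pr_chain (e := fun j p w => [forall i, zstep (S j (Xseq S p)) w i == z' j i])
                 (c := fun=> \prod_(i < k) n%:R^-1)) => [om | j p lt_jt _].
  by apply: eq_forallb => j; rewrite /Zof /hist -Xseq_take /z' valK.
exact/step_Z_all/S_Xseq_neq0/size_tuple.
Qed.

Definition chosen_miss (j : 'I_t) : pred (t.-tuple (step n k)) :=
  [pred om | stY (tnth om j) (stc (tnth om j)) \notin S j (Xseq S (take j om))].

Lemma Pr_chosen_miss j0 : Pr S R (chosen_miss j0) = (1 - m%:R / n%:R) ^+ k.
Proof.
apply: (Pr_chain_at (e := fun p w => stY w (stc w) \notin S j0 (Xseq S p))) => // p size_p.
rewrite -(card_S (h := Xseq S p) (ltn_ord j0)) ?size_Xseq //.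
exact/step_miss/S_Xseq_neq0.
Qed.

Lemma Pr_X_in_Z :
  1 - t%:R * (1 - m%:R / n%:R) ^+ k <=
  @Pr n k t S R [pred om | [forall j, exists j', exists i, Xof S om j == Zof S om j' i]].
Proof.
have X_in_Z om : ~~ [exists j, chosen_miss j om] ->
    [forall j, exists j', exists i, Xof S om j == Zof S om j' i].
  move=> /existsPn no_miss; apply/forallP => j; apply/existsP; exists j.
  apply/existsP; exists (stc (tnth om j)).
  move: (no_miss j); rewrite /= negbK /Xof /Zof /hist -Xseq_take /xstep /zstep => hit.
  by rewrite hit ifT //; apply/existsP; exists (stc (tnth om j)).
apply: le_trans (ler_sum_subset (@weight_ge0 R n k t S) X_in_Z).
rewrite -/(Pr S R _) (Pr_predC [pred om | [exists j, chosen_miss j om]]) lerD2l lerN2.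
apply: le_trans (ler_sum_exists (@weight_ge0 R n k t S) chosen_miss) _.
rewrite (eq_bigr (fun=> (1 - m%:R / n%:R) ^+ k)) => [|j _]; last exact: Pr_chosen_miss.
by rewrite sumr_const card_ord -[_ *+ t]mulr_natl.
Qed.

End Construction.

Unset Implicit Arguments.

Theorem mainTheorem3 (R : realFieldType) (n t k m : nat) (sigma alpha : R)
    (S : nat -> seq 'I_n -> {set 'I_n}) :
  (0 < n)%N -> (0 < t)%N ->
  0 < sigma -> sigma <= 1 -> sigma * n%:R = m%:R ->
  0 < alpha -> alpha / sigma = k%:R -> (0 < k)%N ->
  (forall (j : nat) (h : seq 'I_n), (j < t)%N -> size h = j -> #|S j h| = m) ->
  [/\ (* (a) *)
      forall x : t.-tuple 'I_n,
        @Pr n k t S R [pred om | [forall j, @Xof n k t S om j == tnth x j]]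
        = @adaptive_pmf n t S R x,
      (* (b) *)
      forall (j : 'I_t) (i : 'I_k) (v : 'I_n),
        @Pr n k t S R [pred om | @Zof n k t S om j i == v] = n%:R^-1,
      (* (c) *)
      forall z : 'I_t -> 'I_k -> 'I_n,
        @Pr n k t S R [pred om | [forall j, forall i, @Zof n k t S om j i == z j i]]
        = \prod_(j < t) \prod_(i < k) @Pr n k t S R [pred om | @Zof n k t S om j i == z j i]
    & (* (d) *)
      1 - t%:R * (1 - sigma) ^+ k
      <= @Pr n k t S R [pred om | [forall j, exists j', exists i,
                            @Xof n k t S om j == @Zof n k t S om j' i]] ].
Proof.
move=> n_gt0 _ sigma_gt0 _ sigma_n _ _ k_gt0 card_S.
have m_gt0 : (0 < m)%N by rewrite -(ltr0n R) -sigma_n mulr_gt0 // ltr0n.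
have sigmaE : sigma = m%:R / n%:R by rewrite -sigma_n mulfK // pnatr_eq0 -lt0n.
split.
- exact: (Pr_X R n_gt0 k_gt0 m_gt0 card_S).
- exact: (Pr_Z_at R n_gt0 k_gt0 m_gt0 card_S).
- move=> z; rewrite (Pr_Z_all R n_gt0 k_gt0 m_gt0 card_S).
  apply: eq_bigr => j _; apply: eq_bigr => i _.
  by rewrite (Pr_Z_at R n_gt0 k_gt0 m_gt0 card_S).
- by rewrite sigmaE; exact: (Pr_X_in_Z R n_gt0 k_gt0 m_gt0 card_S).
Qed.
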